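(* Let $\alpha>0$, $\beta,\eta,\kappa\in\mathbb{R}$, $\rho>0$, $p\geq 1$, and $0\le a<x$. Let $f,g$ be two positive functions on $[0,\infty)$ with $f,g\in X^{p}_{c}(a,x)$ (for some $c\in\mathbb{R}$), such that ${}^{\rho}\mathcal{I}^{\alpha,\beta}_{a+,\eta,\kappa}f^{p}(x)<\infty$ and ${}^{\rho}\mathcal{I}^{\alpha,\beta}_{a+,\eta,\kappa}g^{p}(x)<\infty$. Suppose there are real numbers $m,M$ and $\gamma$ with $0<\gamma<m\leq \frac{f(t)}{g(t)}\leq M$ for all $t\in[a,x]$. Then $$\frac{M+1}{M-\gamma}\left({}^{\rho}\mathcal{I}^{\alpha,\beta}_{a+,\eta,\kappa}(f-\gamma g)^{p}(x)\right)^{1/p}\leq\left({}^{\rho}\mathcal{I}^{\alpha,\beta}_{a+,\eta,\kappa}f^{p}(x)\right)^{1/p}+\left({}^{\rho}\mathcal{I}^{\alpha,\beta}_{a+,\eta,\kappa}g^{p}(x)\right)^{1/p}\leq\frac{m+1}{m-\gamma}\left({}^{\rho}\mathcal{I}^{\alpha,\beta}_{a+,\eta,\kappa}(f-\gamma g)^{p}(x)\right)^{1/p}.$$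
   Context: For $c\in\mathbb{R}$ and $1\le p<\infty$, $X^{p}_{c}(a,b)$ denotes the space of Lebesgue measurable functions $f$ on $(a,b)$ with $\left(\int_a^b |t^{c}f(t)|^{p}\,\frac{dt}{t}\right)^{1/p}<\infty$. For $\alpha>0$, $\beta,\eta,\kappa\in\mathbb{R}$, $\rho>0$, $0\le a<x$, and a function $\varphi$, the generalized (Katugampola) fractional integral is $${}^{\rho}\mathcal{I}^{\alpha,\beta}_{a+,\eta,\kappa}\varphi(x)=\frac{\rho^{1-\beta}x^{\kappa}}{\Gamma(\alpha)}\int_{a}^{x}\frac{\tau^{\rho(\eta+1)-1}}{(x^{\rho}-\tau^{\rho})^{1-\alpha}}\varphi(\tau)\,d\tau,$$ whenever the integral exists. ${}^{\rho}\mathcal{I}^{\alpha,\beta}_{a+,\eta,\kappa}(f-\gamma g)^{p}(x)$ means the operator applied to $\tau\mapsto (f(\tau)-\gamma g(\tau))^p$, evaluated at $x$. *)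

From HB Require Import structures.
From mathcomp Require Import all_boot all_order all_algebra.
From mathcomp Require Import all_classical all_reals all_analysis.
Set Implicit Arguments. Unset Strict Implicit. Unset Printing Implicit Defensive.
Import Order.TTheory GRing.Theory Num.Theory.
Import numFieldNormedType.Exports.
Local Open Scope classical_set_scope.
Local Open Scope ring_scope.

Definition Gamma (R : realType) (a : R) : R :=
  fine (\int[@lebesgue_measure R]_(t in `]0%R, +oo[) ((t `^ (a - 1)) * expR (- t))%:E)%E.

Definition katI (R : realType) (alpha beta eta kappa rho a : R) (phi : R -> R) (x : R) : \bar R :=
  ((rho `^ (1 - beta) * x `^ kappa / Gamma alpha)%:E *
   \int[@lebesgue_measure R]_(tau in `]a, x[)
      ((tau `^ (rho * (eta + 1) - 1)) * (x `^ rho - tau `^ rho) `^ (alpha - 1) * phi tau)%:E)%E.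

Definition Xpc (R : realType) (c p a b : R) (f : R -> R) : Prop :=
  measurable_fun `]a, b[ f /\
  (\int[@lebesgue_measure R]_(t in `]a, b[) ((`| t `^ c * f t | `^ p) / t)%:E < +oo)%E.

(** Writing [h := f - gamma g], the ratio bounds [m <= f/g <= M] give, pointwise on
    [(a, x)], [0 <= h <= (M - gamma) g], [h <= (M - gamma)/M f], [f <= m/(m - gamma) h]
    and [g <= 1/(m - gamma) h].  The fractional integral has a nonnegative kernel, so
    it is monotone and positively homogeneous; hence [0 <= u <= k v] pointwise yields
    [I(u^p)^(1/p) <= k I(v^p)^(1/p)].  Applying this to the four comparisons and
    adding them gives both inequalities. *)
From HB Require Import structures.
From mathcomp Require Import all_boot all_order all_algebra.
From mathcomp Require Import all_classical all_reals all_analysis.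
From mathcomp Require Import measurable_realfun lra.
Set Implicit Arguments. Unset Strict Implicit. Unset Printing Implicit Defensive.
Import Order.TTheory GRing.Theory Num.Theory.
Import numFieldNormedType.Exports.
Local Open Scope classical_set_scope.
Local Open Scope ring_scope.

Lemma Gamma_ge0 (R : realType) (s : R) : 0 <= Gamma s.
Proof.
apply: fine_ge0; apply: integral_ge0 => t _.
by rewrite lee_fin mulr_ge0 ?powR_ge0 ?expR_ge0.
Qed.

Lemma fine_powR_inv_le (R : realType) (A B : \bar R) (k p : R) :
  0 < p -> 0 <= k -> (0 <= A)%E -> (0 <= B)%E -> (B < +oo)%E ->
  (A <= (k `^ p)%:E * B)%E ->
  (A < +oo)%E /\ fine A `^ p^-1 <= k * fine B `^ p^-1.
Proof.
move=> p_gt0 k_ge0 + + + AB; case: B AB => [b| |] //; case: A => [A| |] //=.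
rewrite -EFinM !lee_fin => AB A_ge0 b_ge0 _; split; first exact: ltry.
have kb_ge0 : 0 <= k `^ p * b by rewrite mulr_ge0 ?powR_ge0.
have pinv_ge0 : 0 <= p^-1 by rewrite invr_ge0 ltW.
apply: le_trans (ge0_ler_powR pinv_ge0 _ _ AB) _; rewrite ?nnegrE //.
by rewrite powRM ?powR_ge0 // -powRrM mulfV ?gt_eqF // powRr1.
Qed.

Section KatugampolaIntegral.
Variables (R : realType) (alpha beta eta kappa rho a x : R).

Let I (phi : R -> R) : \bar R := katI alpha beta eta kappa rho a phi x.

Let kernel (tau : R) : R :=
  tau `^ (rho * (eta + 1) - 1) * (x `^ rho - tau `^ rho) `^ (alpha - 1).

Let measurable_kernel : measurable_fun `]a, x[ kernel.
Proof.
apply: measurable_funM; first exact: measurable_funS (measurable_powR _).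
apply: measurableT_comp (measurable_powR _) _; apply: measurable_funB => //.
exact: measurable_funS (measurable_powR _).
Qed.

Let measurable_integrand (phi : R -> R) : measurable_fun `]a, x[ phi ->
  measurable_fun `]a, x[ (fun tau => (kernel tau * phi tau)%:E).
Proof. by move=> mphi; apply/measurable_EFinP; apply: measurable_funM. Qed.

Let scale_ge0 : 0 <= rho `^ (1 - beta) * x `^ kappa / Gamma alpha.
Proof. by rewrite divr_ge0 ?mulr_ge0 ?powR_ge0 ?Gamma_ge0. Qed.

Lemma katI_ge0 (phi : R -> R) : {in `]a, x[, forall t, 0 <= phi t} -> (0 <= I phi)%E.
Proof.
move=> phi_ge0; apply: mule_ge0; first by rewrite lee_fin.
by apply: integral_ge0 => t /phi_ge0 ?; rewrite lee_fin !mulr_ge0 ?powR_ge0.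
Qed.

Lemma katI_le (phi psi : R -> R) :
  measurable_fun `]a, x[ phi -> measurable_fun `]a, x[ psi ->
  {in `]a, x[, forall t, 0 <= phi t <= psi t} -> (I phi <= I psi)%E.
Proof.
move=> mphi mpsi phi_psi; apply: lee_wpmul2l; first by rewrite lee_fin.
apply: ge0_le_integral => //; try exact: measurable_integrand.
  by move=> t /phi_psi /andP[phi_ge0 _]; rewrite lee_fin !mulr_ge0 ?powR_ge0.
by move=> t /phi_psi /andP[_ le_phi_psi]; rewrite lee_fin ler_wpM2l ?mulr_ge0 ?powR_ge0.
Qed.

Lemma katIZ (k : R) (psi : R -> R) : 0 <= k ->
  measurable_fun `]a, x[ psi -> {in `]a, x[, forall t, 0 <= psi t} ->
  I (fun t => k * psi t) = (k%:E * I psi)%E.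
Proof.
move=> k_ge0 mpsi psi_ge0; rewrite /I /katI muleCA; congr (_ * _)%E.
rewrite -ge0_integralZl_EFin //.
- by apply: eq_integral => t _; rewrite -EFinM mulrCA.
- by move=> t /psi_ge0 ?; rewrite lee_fin !mulr_ge0 ?powR_ge0.
- exact: measurable_integrand.
Qed.

Lemma katI_powR_le (u v : R -> R) (k p : R) : 0 < k -> 0 <= p ->
  measurable_fun `]a, x[ u -> measurable_fun `]a, x[ v ->
  {in `]a, x[, forall t, 0 <= u t <= k * v t} ->
  (I (fun t => (u t `^ p)%R) <= (k `^ p)%:E * I (fun t => (v t `^ p)%R))%E.
Proof.
move=> k_gt0 p_ge0 mu mv u_kv; have k_ge0 := ltW k_gt0.
have mpowR w : measurable_fun `]a, x[ w -> measurable_fun `]a, x[ (fun t => (w t `^ p)%R).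
  by move=> mw; apply: measurableT_comp (measurable_powR _) mw.
rewrite -katIZ ?powR_ge0 //; [|exact: mpowR|by move=> *; apply: powR_ge0].
apply: katI_le; [exact: mpowR | by apply: measurable_funM => //; apply: mpowR |].
move=> t /u_kv /andP[u_ge0 le_u_kv]; rewrite powR_ge0 /= -powRM //.
  by rewrite ge0_ler_powR ?nnegrE // (le_trans u_ge0).
by rewrite -(pmulr_rge0 _ k_gt0) (le_trans u_ge0).
Qed.

Lemma katI_powR_root_le (u v : R -> R) (k p : R) : 0 < k -> 0 < p ->
  measurable_fun `]a, x[ u -> measurable_fun `]a, x[ v ->
  {in `]a, x[, forall t, 0 <= u t <= k * v t} ->
  (I (fun t => (v t `^ p)%R) < +oo)%E ->
  (I (fun t => (u t `^ p)%R) < +oo)%E /\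
  fine (I (fun t => (u t `^ p)%R)) `^ p^-1 <= k * fine (I (fun t => (v t `^ p)%R)) `^ p^-1.
Proof.
move=> k_gt0 p_gt0 mu mv u_kv Iv_fin.
have Ipow_ge0 w : (0 <= I (fun t => (w t `^ p)%R))%E.
  by apply: katI_ge0 => t _; apply: powR_ge0.
apply: fine_powR_inv_le (ltW k_gt0) (Ipow_ge0 u) (Ipow_ge0 v) Iv_fin _ => //.
exact: katI_powR_le (ltW p_gt0) mu mv u_kv.
Qed.

End KatugampolaIntegral.

Lemma ratio_bounds (R : realFieldType) (F G m M gamma : R) :
  0 < F -> 0 < G -> 0 < gamma -> gamma < m -> m <= F / G <= M ->
  [/\ 0 <= F - gamma * G <= (M - gamma) * G,
      0 <= F - gamma * G <= (M - gamma) / M * F,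
      0 <= F <= m / (m - gamma) * (F - gamma * G) &
      0 <= G <= 1 / (m - gamma) * (F - gamma * G)].
Proof.
move=> F_gt0 G_gt0 gamma_gt0 gamma_lt_m /andP[].
rewrite ler_pdivlMr // ler_pdivrMr // => mG_le_F F_le_MG.
have M_gt0 : 0 < M by rewrite -(pmulr_lgt0 _ G_gt0) (lt_le_trans F_gt0).
have m_gamma_gt0 : 0 < m - gamma by rewrite subr_gt0.
have gammaF_le : gamma * F <= gamma * (M * G) by rewrite ler_pM2l.
have gammamG_le : gamma * (m * G) <= gamma * F by rewrite ler_pM2l.
have gammaG_le : gamma * G <= m * G by rewrite ler_pM2r // ltW.
have h_ge0 : 0 <= F - gamma * G by lra.
rewrite h_ge0 (ltW F_gt0) (ltW G_gt0).
by split; rewrite //=; try rewrite [_ / _ * _]mulrAC ler_pdivlMr //; lra.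
Qed.

Lemma sum_bounds_of_comparisons (R : realFieldType) (F G H m M gamma : R) :
  0 < m - gamma -> 0 < M - gamma -> 0 < M ->
  H <= (M - gamma) * G -> H <= (M - gamma) / M * F ->
  F <= m / (m - gamma) * H -> G <= 1 / (m - gamma) * H ->
  (M + 1) / (M - gamma) * H <= F + G <= (m + 1) / (m - gamma) * H.
Proof.
move=> m_gamma_gt0 M_gamma_gt0 M_gt0 H_G H_F F_H G_H; apply/andP; split.
  rewrite [_ / _ * _]mulrAC ler_pdivlMr // in H_F.
  rewrite [_ / _ * _]mulrAC ler_pdivrMr //; lra.
by apply: le_trans (lerD F_H G_H) _; rewrite -!mulrDl.
Qed.

Theorem theorem12 (R : realType) (alpha beta eta kappa rho p a x c m M gamma : R)
  (f g : R -> R) :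
  0 < alpha -> 0 < rho -> 1 <= p -> 0 <= a -> a < x ->
  (forall t, 0 <= t -> 0 < f t) -> (forall t, 0 <= t -> 0 < g t) ->
  Xpc c p a x f -> Xpc c p a x g ->
  (katI alpha beta eta kappa rho a (fun t => powR (f t) p) x < +oo)%E ->
  (katI alpha beta eta kappa rho a (fun t => powR (g t) p) x < +oo)%E ->
  0 < gamma -> gamma < m ->
  (forall t, a <= t <= x -> m <= f t / g t <= M) ->
  let IF := fine (katI alpha beta eta kappa rho a (fun t => powR (f t) p) x) in
  let IG := fine (katI alpha beta eta kappa rho a (fun t => powR (g t) p) x) in
  let IH := fine (katI alpha beta eta kappa rho a (fun t => powR (f t - gamma * g t) p) x) in
  (M + 1) / (M - gamma) * powR IH p^-1 <= powR IF p^-1 + powR IG p^-1 /\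
  powR IF p^-1 + powR IG p^-1 <= (m + 1) / (m - gamma) * powR IH p^-1.
Proof.
move=> _ _ p_ge1 a_ge0 a_lt_x f_gt0 g_gt0 [mf _] [mg _] If_fin Ig_fin gamma_gt0 gamma_lt_m
  f_g_bounds IF IG IH.
set h := fun t => f t - gamma * g t.
have mh : measurable_fun `]a, x[ h by apply: measurable_funB => //; apply: measurable_funM.
have p_gt0 : 0 < p := lt_le_trans ltr01 p_ge1.
have m_gamma_gt0 : 0 < m - gamma by rewrite subr_gt0.
have /andP[m_le_fga fga_le_M] : m <= f a / g a <= M by rewrite f_g_bounds ?lexx ?ltW.
have M_gamma_gt0 : 0 < M - gamma.
  by rewrite subr_gt0 (lt_le_trans gamma_lt_m) ?(le_trans m_le_fga).
have M_gt0 : 0 < M by rewrite (lt_trans gamma_gt0) // -subr_gt0.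
have pointwise : {in `]a, x[, forall t, [/\ 0 <= h t <= (M - gamma) * g t,
    0 <= h t <= (M - gamma) / M * f t, 0 <= f t <= m / (m - gamma) * h t &
    0 <= g t <= 1 / (m - gamma) * h t]}.
  move=> t; rewrite in_itv /= => /andP[a_lt_t t_lt_x].
  have t_ge0 : 0 <= t := le_trans a_ge0 (ltW a_lt_t).
  by apply: ratio_bounds => //; [exact: f_gt0 | exact: g_gt0 | rewrite f_g_bounds ?ltW].
have [Ih_fin h_g] := katI_powR_root_le M_gamma_gt0 p_gt0 mh mg
  (fun t ax => let: And4 h_g _ _ _ := pointwise t ax in h_g) Ig_fin.
have [_ h_f] := katI_powR_root_le (divr_gt0 M_gamma_gt0 M_gt0) p_gt0 mh mf
  (fun t ax => let: And4 _ h_f _ _ := pointwise t ax in h_f) If_fin.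
have [_ f_h] := katI_powR_root_le (divr_gt0 (lt_trans gamma_gt0 gamma_lt_m) m_gamma_gt0)
  p_gt0 mf mh (fun t ax => let: And4 _ _ f_h _ := pointwise t ax in f_h) Ih_fin.
have [_ g_h] := katI_powR_root_le (divr_gt0 ltr01 m_gamma_gt0) p_gt0 mg mh
  (fun t ax => let: And4 _ _ _ g_h := pointwise t ax in g_h) Ih_fin.
by apply/andP; exact: sum_bounds_of_comparisons h_g h_f f_h g_h.
Qed.
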